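(* Let $k$ be a field of characteristic $0$ and $G \in \{A_4, S_4, A_5\}$. Suppose $\omega_4 \in k$ if $G = A_4$ or $S_4$, and $\omega_5 \in k$ if $G = A_5$. Let $\rho\colon G \hookrightarrow \mathrm{PGL}_2(k)$ be an embedding (unique up to conjugacy). Then the $G$-variety ${}^{\rho}\mathbb{P}^1$ is not strongly incompressible, i.e. there is a non-birational dominant $G$-equivariant morphism ${}^{\rho}\mathbb{P}^1 \to {}^{\rho}\mathbb{P}^1$.
   Context: $\omega_n$ denotes a primitive $n$-th root of unity. ${}^{\rho}\mathbb{P}^1$ is $\mathbb{P}^1$ with the $G$-action induced by $\rho$. A faithful $G$-variety $X$ is strongly incompressible if every dominant $G$-equivariant rational map $X \dashrightarrow Y$ onto a faithful $G$-variety $Y$ is birational. *)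

From HB Require Import structures.
From mathcomp Require Import all_boot all_order all_algebra all_fingroup all_solvable.
From mathcomp Require Import fraction.
Set Implicit Arguments. Unset Strict Implicit. Unset Printing Implicit Defensive.
Import Order.TTheory GRing.Theory Num.Theory.
Local Open Scope ring_scope.

Section P1.
Variable k : fieldType.

Definition ratfun := {fraction {poly k}}.

Definition polyF (p : {poly k}) : ratfun := tofrac p.

Definition evalF (p : {poly k}) (u : ratfun) : ratfun :=
  (map_poly (fun c : k => polyF c%:P) p).[u].

Definition m00 (A : 'M[k]_2) := A ord0 ord0.
Definition m01 (A : 'M[k]_2) := A ord0 ord_max.
Definition m10 (A : 'M[k]_2) := A ord_max ord0.
Definition m11 (A : 'M[k]_2) := A ord_max ord_max.

Definition mobius (A : 'M[k]_2) : ratfun :=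
  polyF (m00 A *: 'X + (m01 A)%:P) / polyF (m10 A *: 'X + (m11 A)%:P).

(* A morphism P^1 -> P^1, [X:Y] |-> [P(X,Y):Q(X,Y)], is given (in the affine
   coordinate x = X/Y) by the rational function p/q with p, q in k[x] coprime. *)
Definition P1_morphism (p q : {poly k}) : bool :=
  coprimep p q && ((p != 0) || (q != 0)).

(* Its degree. Dominant <-> degree >= 1; birational <-> degree = 1. *)
Definition P1_degree (p q : {poly k}) : nat := (maxn (size p) (size q)).-1.

Definition P1_dominant (p q : {poly k}) : Prop := (1 <= P1_degree p q)%N.
Definition P1_birational (p q : {poly k}) : Prop := P1_degree p q = 1%N.

(* Commutation of f = p/q with the Moebius transformation of A:
   f((a x + b)/(c x + d)) = (a f + b)/(c f + d), written projectively. *)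
Definition commutes_with (A : 'M[k]_2) (p q : {poly k}) : Prop :=
  evalF p (mobius A) * polyF (m10 A *: p + m11 A *: q)
  = evalF q (mobius A) * polyF (m00 A *: p + m01 A *: q).

Definition proj_eq (A B : 'M[k]_2) : Prop := exists2 l : k, l != 0 & A = l *: B.

(* rho : G -> PGL_2(k), given by lifts rho g in GL_2(k), is an injective
   group homomorphism. *)
Definition PGL2_embedding (gT : finGroupType) (G : {group gT})
    (rho : gT -> 'M[k]_2) : Prop :=
  [/\ forall g, g \in G -> rho g \in unitmx,
      forall g h, g \in G -> h \in G -> proj_eq (rho (g * h)%g) (rho g *m rho h)
    & forall g, g \in G -> proj_eq (rho g) 1%:M -> g = 1%g].

Definition equivariant (gT : finGroupType) (G : {group gT})
    (rho : gT -> 'M[k]_2) (p q : {poly k}) : Prop :=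
  forall g, g \in G -> commutes_with (rho g) p q.

End P1.

From HB Require Import structures.
From mathcomp Require Import all_boot all_order all_algebra all_fingroup all_solvable.
From mathcomp Require Import fraction separable ring zify.
Import Order.TTheory GRing.Theory Num.Theory.
Local Open Scope ring_scope.
Set Implicit Arguments. Unset Strict Implicit. Unset Printing Implicit Defensive.

(* Pick s in k whose orbit under the (transposed) action of G consists of #|G|
   distinct points, and let F be the binary form of degree N = #|G| vanishing
   exactly on that orbit; F is semi-invariant under G. The gradient of a
   semi-invariant form is covariant, so the polar map
   [X : Y] |-> [- dF/dY : dF/dX] is G-equivariant. As F has no multiple root
   and k has characteristic 0, this map is a morphism of degree N - 1 >= 2:
   dominant but not birational. *)

Section TwoByTwo.
Variable k : fieldType.
Implicit Types A B : 'M[k]_2.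

Lemma ord_max_widen : widen_ord (leqnSn 1) (@ord_max 0) = (@ord0 1).
Proof. exact: val_inj. Qed.

Lemma m00M A B : m00 (A *m B) = m00 A * m00 B + m01 A * m10 B.
Proof. by rewrite /m00 /m01 /m10 !mxE !big_ord_recr big_ord0 /= add0r ord_max_widen. Qed.

Lemma m01M A B : m01 (A *m B) = m00 A * m01 B + m01 A * m11 B.
Proof. by rewrite /m00 /m01 /m11 !mxE !big_ord_recr big_ord0 /= add0r ord_max_widen. Qed.

Lemma m10M A B : m10 (A *m B) = m10 A * m00 B + m11 A * m10 B.
Proof. by rewrite /m00 /m11 /m10 !mxE !big_ord_recr big_ord0 /= add0r ord_max_widen. Qed.

Lemma m11M A B : m11 (A *m B) = m10 A * m01 B + m11 A * m11 B.
Proof. by rewrite /m11 /m01 /m10 !mxE !big_ord_recr big_ord0 /= add0r ord_max_widen. Qed.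

Lemma mx22P A B : [/\ m00 A = m00 B, m01 A = m01 B, m10 A = m10 B & m11 A = m11 B] -> A = B.
Proof.
case=> e00 e01 e10 e11; apply/matrixP => i j.
have ord2 (x : 'I_2) : x = ord0 \/ x = ord_max.
  by case: x => [[|[|n]] lt_x2]; [left|right|]; rewrite //; apply: val_inj.
by case: (ord2 i) => ->; case: (ord2 j) => ->.
Qed.

Lemma det_mx22 A : \det A = m00 A * m11 A - m01 A * m10 A.
Proof.
rewrite (expand_det_row _ ord0) !big_ord_recr big_ord0 /cofactor /= !det_mx11.
have lift0 : lift ord0 (0 : 'I_1) = ord_max :> 'I_2 by apply: val_inj.
have lift1 : lift ord_max (0 : 'I_1) = ord0 :> 'I_2 by apply: val_inj.
rewrite /m00 /m01 /m10 /m11 !mxE /= ord_max_widen lift0 lift1 add0r expr0 expr1; ring.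
Qed.
End TwoByTwo.

Section Homogenization.
Variable k : fieldType.
Implicit Types (P : {poly k}) (r : ratfun k).

Lemma evalFE P r : evalF P r = (map_poly (@tofrac _ \o polyC) P).[r].
Proof. by []. Qed.

Lemma evalFN P r : evalF (- P) r = - evalF P r.
Proof. by rewrite !evalFE rmorphN hornerN. Qed.

Lemma evalF_prod (I : finType) (D : pred I) (F : I -> {poly k}) r :
  evalF (\prod_(i in D) F i) r = \prod_(i in D) evalF (F i) r.
Proof. by rewrite evalFE rmorph_prod horner_prod. Qed.

Lemma evalF_linear (a b : k) r :
  evalF (a *: 'X + b%:P) r = polyF a%:P * r + polyF b%:P.
Proof. by rewrite evalFE rmorphD /= -mul_polyC rmorphM /= map_polyX !map_polyC /= !hornerE. Qed.

(* For the binary form Y^N P(X/Y), dehomogenised at Y = 1, the partial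
   derivatives in X and Y are P^`() and partialY N P. *)
Definition partialY (N : nat) P := P *+ N - 'X * P^`().

Lemma size_partialY n P : (size P <= n.+2)%N -> (size (partialY n.+1 P) <= n.+1)%N.
Proof.
move=> szP; apply/leq_sizeP => -[|j] ltnj //.
rewrite coefB coefMn coefXM coef_deriv /=.
have [->|neq_jn] := eqVneq j n; first by rewrite subrr.
suff -> : P`_j.+1 = 0 by rewrite !mul0rn subrr.
by apply: (leq_sizeP _ _ szP); rewrite ltn_neqAle eq_sym neq_jn.
Qed.

Variables u w : {poly k}.

(* w^n P(u/w), i.e. the degree n form attached to P evaluated at (u, w). *)
Definition homog n P := \sum_(i < n.+1) (P`_i)%:P * u ^+ i * w ^+ (n - i).

Lemma evalF_homog n P : (size P <= n.+1)%N -> w != 0 ->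
  evalF P (polyF u / polyF w) * polyF w ^+ n = polyF (homog n P).
Proof.
move=> szP w_neq0; have W_neq0 : polyF w != 0 by rewrite tofrac_eq0.
rewrite evalFE (horner_coef_wide _ (_ : size _ <= n.+1)%N) ?size_map_poly //.
rewrite mulr_suml /polyF /homog rmorph_sum; apply: eq_bigr => -[i /= ltin] _.
rewrite coef_map_id0 /= ?rmorph0 // !tofracM !tofracXn.
by rewrite -(subnKC (ltnSE ltin)) exprD expr_div_n addKn -!mulrA mulKf ?expf_neq0.
Qed.

Lemma homog_deriv n P :
  homog n P^`() = \sum_(i < n.+2) (P`_i)%:P * i%:R * u ^+ i.-1 * w ^+ (n.+1 - i).
Proof.
rewrite big_ord_recl /= mulr0 !mul0r add0r; apply: eq_bigr => i _.
by rewrite /bump /= add1n subSS coef_deriv polyCMn mulr_natr.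
Qed.

Lemma homog_partialY n P : homog n (partialY n.+1 P) =
  \sum_(i < n.+2) (P`_i)%:P * (n.+1 - i)%:R * u ^+ i * w ^+ (n - i).
Proof.
rewrite big_ord_recr /= subnn mulr0 !mul0r addr0; apply: eq_bigr => -[[|j] ltjn] _ /=.
  by rewrite coefB coefMn coefXM subr0 subn0 polyCMn mulr_natr.
rewrite coefB coefMn coefXM coef_deriv polyCB !polyCMn mulr_natr -mulrnBr //.
by rewrite ltnW.
Qed.

Lemma deriv_homog n P : (homog n.+1 P)^`() =
  u^`() * homog n P^`() + w^`() * homog n (partialY n.+1 P).
Proof.
rewrite homog_deriv homog_partialY /homog raddf_sum !mulr_sumr -big_split /=.
apply: eq_bigr => -[j ltjn] _ /=.
rewrite !derivM !deriv_exp derivC mul0r add0r.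
rewrite -[_ *+ j]mulr_natr -[_ *+ (n.+1 - j)]mulr_natr.
have -> : (n.+1 - j).-1 = (n - j)%N by lia.
move: (u ^+ j) (u ^+ j.-1) (w ^+ (n.+1 - j)) (w ^+ (n - j)) => U U' W W'; ring.
Qed.

Lemma homog_euler n P :
  u * homog n P^`() + w * homog n (partialY n.+1 P) = n.+1%:R * homog n.+1 P.
Proof.
rewrite homog_deriv homog_partialY /homog !mulr_sumr -big_split /=.
apply: eq_bigr => -[j ltjn] _ /=.
have uE : j%:R * u ^+ j.-1 * u = j%:R * u ^+ j.
  by case: j {ltjn} => [|j]; rewrite ?mul0r // -mulrA -exprSr.
have wE : (n.+1 - j)%:R * w ^+ (n - j) * w = (n.+1 - j)%:R * w ^+ (n.+1 - j).
  have [lejn|ltnj] := leqP j n; first by rewrite -mulrA -exprSr subSn.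
  by rewrite (_ : n.+1 - j = 0)%N ?mul0r //; lia.
have NE : n.+1%:R = j%:R + (n.+1 - j)%:R :> {poly k} by rewrite -natrD subnKC.
rewrite NE; transitivity ((P`_j)%:P * (j%:R * u ^+ j.-1 * u) * w ^+ (n.+1 - j)
   + (P`_j)%:P * u ^+ j * ((n.+1 - j)%:R * w ^+ (n - j) * w)); first ring.
rewrite uE wE; ring.
Qed.

End Homogenization.

Section Moebius.
Variable k : fieldType.
Implicit Types (A : 'M[k]_2) (F : {poly k}).

Definition mobius_num A : {poly k} := m00 A *: 'X + (m01 A)%:P.
Definition mobius_den A : {poly k} := m10 A *: 'X + (m11 A)%:P.

Lemma mobiusE A : mobius A = polyF (mobius_num A) / polyF (mobius_den A).
Proof. by []. Qed.

Lemma polyF_inj : injective (@polyF k).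
Proof. by move=> p q /eqP; rewrite tofrac_eq => /eqP. Qed.

Lemma linear_poly_eq0 (a b : k) : (a *: 'X + b%:P == 0 :> {poly k}) = (a == 0) && (b == 0).
Proof.
apply/eqP/andP => [E|[/eqP-> /eqP->]]; last by rewrite scale0r add0r.
have := congr1 (fun p : {poly k} => (p`_1, p`_0)) E.
by rewrite !coefE /= mulr1 mulr0 addr0 add0r => -[-> ->].
Qed.

Lemma mobius_den_neq0 A : \det A != 0 -> mobius_den A != 0.
Proof.
apply: contra; rewrite linear_poly_eq0 => /andP[/eqP c0 /eqP d0].
by rewrite det_mx22 c0 d0 !mulr0 subr0.
Qed.

Definition semi_invariant A N F := exists2 C : k, C != 0 &
  evalF F (mobius A) * polyF (mobius_den A) ^+ N = polyF (C%:P * F).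

Lemma semi_invariant_commutes A n F : \det A != 0 -> (size F <= n.+2)%N ->
  semi_invariant A n.+1 F -> commutes_with A (- partialY n.+1 F) F^`().
Proof.
move=> detA szF [C C_neq0 invF].
set u := mobius_num A; set w := mobius_den A.
have w_neq0 : w != 0 by apply: mobius_den_neq0.
have W_neq0 : polyF w ^+ n != 0 by rewrite expf_neq0 ?tofrac_eq0.
have szF' : (size F^`() <= n.+1)%N.
  by apply: leq_trans (size_poly _ _) _; rewrite -ltnS; case: (size F) szF.
(* Chain rule and Euler's identity express C F_X and C F_Y through the
   transformed partials T1 and T2; what remains is (ad - bc) T1 T2 on both sides. *)
set T1 := homog u w n F^`(); set T2 := homog u w n (partialY n.+1 F).
have homF : homog u w n.+1 F = C%:P * F.
  by apply: polyF_inj; rewrite -invF -evalF_homog.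
have dF : C%:P * F^`() = (m00 A)%:P * T1 + (m10 A)%:P * T2.
  rewrite mul_polyC -derivZ -mul_polyC -homF deriv_homog.
  by rewrite /u /w /mobius_num /mobius_den !derivD !derivZ derivX !derivC !addr0 !alg_polyC.
have euler : u * T1 + w * T2 = n.+1%:R * (C%:P * F) by rewrite -homF homog_euler.
have dY : C%:P * partialY n.+1 F = (m01 A)%:P * T1 + (m11 A)%:P * T2.
  transitivity (n.+1%:R * (C%:P * F) - 'X * (C%:P * F^`())).
    by rewrite /partialY -mulr_natl; ring.
  rewrite -euler dF /u /w /mobius_num /mobius_den -!mul_polyC; ring.
rewrite /commutes_with; apply: (mulIf W_neq0).
rewrite !(mulrAC _ (polyF _)) evalFN mulNr mobiusE !evalF_homog ?size_partialY //.
rewrite /polyF -tofracN -!tofracM; congr tofrac; rewrite -/T1 -/T2.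
apply: (mulfI (_ : C%:P != 0)); first by rewrite polyC_eq0.
rewrite -!mul_polyC.
transitivity (T2 * ((m10 A)%:P * (C%:P * partialY n.+1 F) - (m11 A)%:P * (C%:P * F^`()))).
  ring.
rewrite dY dF; symmetry.
transitivity (T1 * ((m01 A)%:P * (C%:P * F^`()) - (m00 A)%:P * (C%:P * partialY n.+1 F))).
  ring.
rewrite dY dF; ring.
Qed.

End Moebius.

Section CharZero.
Variable k : fieldType.
Hypothesis char0 : [pchar k] =i pred0.

Lemma pchar0_natr_inj : injective (fun n : nat => n%:R : k).
Proof.
move=> i j /= eq_ij; wlog le_ij : i j eq_ij / (i <= j)%N.
  by move=> sym; have [/sym|/ltnW/sym] := leqP i j; [apply|move=> ->].
have /eqP : (j - i)%:R = 0 :> k by rewrite natrB // eq_ij subrr.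
by rewrite (pcharf0P k).1 // subn_eq0 => le_ji; apply/eqP; rewrite eqn_leq le_ij.
Qed.

Lemma exists_nonroot (P : {poly k}) : P != 0 -> exists s, ~~ root P s.
Proof.
move=> P_neq0; pose pts := [seq i%:R | i <- iota 0 (size P)] : seq k.
have uniq_pts : uniq pts by rewrite (map_inj_uniq pchar0_natr_inj) iota_uniq.
have [all_roots|/allPn[s _ nroot]] := boolP (all (root P) pts); last by exists s.
by have := max_poly_roots P_neq0 all_roots uniq_pts; rewrite size_map size_iota ltnn.
Qed.

Lemma polar_map_P1 n (F : {poly k}) : size F = n.+2 -> separable_poly F ->
  P1_morphism (- partialY n.+1 F) F^`() /\ P1_degree (- partialY n.+1 F) F^`() = n.
Proof.
move=> szF; rewrite unlock => sepF; have natr_neq0 m : m.+1%:R != 0 :> k by rewrite (pcharf0P k).1.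
have szF' : size F^`() = n.+1.
  rewrite /deriv size_poly_eq szF //= -mulr_natr mulf_neq0 //.
  have -> : F`_n.+1 = lead_coef F by rewrite lead_coefE szF.
  by rewrite lead_coef_eq0 -size_poly_eq0 szF.
have szY : (size (partialY n.+1 F) <= n.+1)%N by rewrite size_partialY ?szF.
split; last by rewrite /P1_degree size_polyN szF' (maxn_idPr szY).
apply/andP; split; last by rewrite -(size_poly_gt0 F^`()) szF' orbT.
rewrite coprimep_sym /partialY opprB coprimep_addl_mul -scaler_nat -scaleNr.
by rewrite coprimepZr ?oppr_eq0 // coprimep_sym.
Qed.

End CharZero.

Section OrbitForms.
Variable k : fieldType.
Implicit Types (s : k) (A X Y Z : 'M[k]_2).

(* orbit_form s X is the linear form x |-> (s 1) X (x 1)^T, whose coefficients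
   are the values at s of orbit_coefX X and orbit_coef0 X. *)
Definition orbit_coefX X : {poly k} := m00 X *: 'X + (m10 X)%:P.
Definition orbit_coef0 X : {poly k} := m01 X *: 'X + (m11 X)%:P.

Definition orbit_form s X : {poly k} :=
  (orbit_coefX X).[s] *: 'X + ((orbit_coef0 X).[s])%:P.

Definition orbit_root s X : k := - ((orbit_coef0 X).[s] / (orbit_coefX X).[s]).

Definition orbit_det X Y : {poly k} :=
  orbit_coefX X * orbit_coef0 Y - orbit_coefX Y * orbit_coef0 X.

Definition fixed_poly Z : {poly k} :=
  m01 Z *: 'X^2 + (m11 Z - m00 Z) *: 'X - (m10 Z)%:P.

Lemma orbit_form_mobius s X A : \det A != 0 ->
  evalF (orbit_form s X) (mobius A) * polyF (mobius_den A) = polyF (orbit_form s (X *m A)).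
Proof.
move=> detA; have W_neq0 : polyF (mobius_den A) != 0.
  by rewrite tofrac_eq0 mobius_den_neq0.
rewrite evalF_linear mobiusE mulrDl -mulrA divfK // /polyF -!tofracM -tofracD.
congr tofrac; rewrite /orbit_form /orbit_coefX /orbit_coef0 !hornerE.
rewrite m00M m10M m01M m11M /mobius_num /mobius_den -!mul_polyC !polyCD !polyCM; ring.
Qed.

Lemma orbit_formZ s l X : orbit_form s (l *: X) = l%:P * orbit_form s X.
Proof.
rewrite /orbit_form /orbit_coefX /orbit_coef0 /m00 /m01 /m10 /m11 !mxE !hornerE.
rewrite -!mul_polyC !polyCD !polyCM; ring.
Qed.

Lemma orbit_formE s X : (orbit_coefX X).[s] != 0 ->
  orbit_form s X = (orbit_coefX X).[s] *: ('X - (orbit_root s X)%:P).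
Proof. by move=> a_neq0; rewrite scalerBr scale_polyC mulrN polyCN opprK mulrC divfK. Qed.

Lemma orbit_root_inj s X Y : (orbit_coefX X).[s] != 0 -> (orbit_coefX Y).[s] != 0 ->
  orbit_root s X = orbit_root s Y -> (orbit_det X Y).[s] = 0.
Proof.
move=> aX aY /oppr_inj eq_root; rewrite /orbit_det hornerD hornerN !hornerM.
rewrite -(divfK aX (orbit_coef0 X).[s]) -(divfK aY (orbit_coef0 Y).[s]) eq_root; ring.
Qed.

Lemma orbit_coefX_neq0 X : \det X != 0 -> orbit_coefX X != 0.
Proof.
apply: contra; rewrite linear_poly_eq0 => /andP[/eqP a0 /eqP c0].
by rewrite det_mx22 a0 c0 !mul0r mulr0 subr0.
Qed.

Lemma orbit_detZr X l Y : orbit_det X (l *: Y) = l *: orbit_det X Y.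
Proof.
rewrite /orbit_det /orbit_coefX /orbit_coef0 /m00 /m01 /m10 /m11 !mxE.
by rewrite -!mul_polyC !polyCM; ring.
Qed.

(* The determinant of the rows (s 1) X and (s 1) Z X is det X times that of
   (s 1) and (s 1) Z; the latter vanishes iff (s 1) is a left eigenvector of Z. *)
Lemma orbit_det_mulmx X Z : orbit_det X (Z *m X) = \det X *: fixed_poly Z.
Proof.
rewrite /orbit_det /orbit_coefX /orbit_coef0 /fixed_poly det_mx22 m00M m01M m10M m11M.
by rewrite -!mul_polyC !polyCD ?polyCB !polyCM; ring.
Qed.

Lemma fixed_poly_eq0 Z : fixed_poly Z = 0 -> Z = m00 Z *: 1%:M.
Proof.
move=> fZ; have coef i : (fixed_poly Z)`_i = 0 by rewrite fZ coef0.
have := coef 2%N; have := coef 1%N; have := coef 0%N.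
rewrite /fixed_poly !coefE /= !mulr0 !mulr1 !addr0 !add0r !subr0.
move=> /eqP; rewrite oppr_eq0 => /eqP c0 /eqP; rewrite subr_eq0 => /eqP d_a b0.
by apply: mx22P; rewrite /m00 /m01 /m10 /m11 !mxE /= !mulr1 !mulr0.
Qed.

End OrbitForms.

Lemma prod_polyC_scaled (k : fieldType) (I : finType) (D : pred I) (F1 F2 : I -> {poly k}) :
  (forall i, D i -> exists2 c : k, c != 0 & F1 i = c%:P * F2 i) ->
  exists2 C : k, C != 0 & \prod_(i in D) F1 i = C%:P * \prod_(i in D) F2 i.
Proof.
move=> scaled; elim/big_rec2: _ => [|i p _ Di [C C_neq0 ->]].
  by exists 1; rewrite ?oner_eq0 ?mul1r.
have [c c_neq0 ->] := scaled i Di; exists (c * C); first by rewrite mulf_neq0.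
by rewrite polyCM mulrACA.
Qed.

Section FiniteSubgroup.
Variables (k : fieldType) (gT : finGroupType) (G : {group gT}) (rho : gT -> 'M[k]_2).
Hypothesis rhoG : PGL2_embedding G rho.

Lemma det_rho_neq0 g : g \in G -> \det (rho g) != 0.
Proof. by case: rhoG => unit_rho _ _ /unit_rho; rewrite unitmxE unitfE. Qed.

Lemma orbit_det_rho_neq0 g h : g \in G -> h \in G -> g != h ->
  orbit_det (rho g) (rho h) != 0.
Proof.
move=> Gg Gh neq_gh; case: rhoG => _ rhoM rho_inj.
have Ghg : (h * g^-1)%g \in G by rewrite groupM ?groupV.
have [l l_neq0 rho_h] := rhoM _ _ Ghg Gg; rewrite mulgKV in rho_h.
rewrite rho_h orbit_detZr orbit_det_mulmx !scaler_eq0 !negb_or l_neq0 det_rho_neq0 //=.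
apply: contra neq_gh => /eqP/fixed_poly_eq0 scalar_Z.
have a_neq0 : m00 (rho (h * g^-1)%g) != 0.
  by apply: contraTneq (det_rho_neq0 Ghg) => a0; rewrite negbK scalar_Z a0 scale0r det0.
by rewrite eq_sym eq_mulgV1; apply/eqP/rho_inj => //; exists (m00 (rho (h * g^-1)%g)).
Qed.

Lemma exists_generic_point : [pchar k] =i pred0 -> exists s,
  (forall g, g \in G -> (orbit_coefX (rho g)).[s] != 0)
  /\ {in G &, injective (fun g => orbit_root s (rho g))}.
Proof.
move=> char0.
pose P := \prod_(g in G) orbit_coefX (rho g)
          * \prod_(g in G) \prod_(h in G | h != g) orbit_det (rho g) (rho h).
have P_neq0 : P != 0.
  rewrite mulf_neq0 //; apply/prodf_neq0 => g Gg.
    exact/orbit_coefX_neq0/det_rho_neq0.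
  by apply/prodf_neq0 => h /andP[Gh neq_hg]; rewrite orbit_det_rho_neq0 // eq_sym.
have [s] := exists_nonroot char0 P_neq0.
rewrite /root hornerM mulf_eq0 negb_or !horner_prod => /andP[/prodf_neq0 coef_neq0].
move=> /prodf_neq0 det_neq0; exists s; split=> // g h Gg Gh eq_root.
apply: contraTeq (det_neq0 g Gg) => neq_gh; rewrite negbK horner_prod.
apply/prodf_eq0; exists h; first by rewrite Gh eq_sym.
by apply/eqP/orbit_root_inj; rewrite ?coef_neq0.
Qed.

Definition orbit_poly s := \prod_(g in G) orbit_form s (rho g).

Lemma orbit_poly_semi_invariant s h : h \in G ->
  semi_invariant (rho h) #|G| (orbit_poly s).
Proof.
move=> Gh; rewrite /semi_invariant /orbit_poly evalF_prod -prodr_const -big_split /=.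
rewrite (eq_bigr (fun g => polyF (orbit_form s (rho g *m rho h)))); last first.
  by move=> g _; rewrite orbit_form_mobius ?det_rho_neq0.
rewrite /polyF -rmorph_prod.
have [C C_neq0 ->] : exists2 C : k, C != 0 &
    \prod_(g in G) orbit_form s (rho g *m rho h)
    = C%:P * \prod_(g in G) orbit_form s (rho (g * h)%g).
  apply: prod_polyC_scaled => g Gg; case: rhoG => _ rhoM _.
  have [l l_neq0 ->] := rhoM _ _ Gg Gh; exists l^-1; first by rewrite invr_eq0.
  by rewrite orbit_formZ mulrA -polyCM mulVf ?mul1r.
exists C => //; congr (tofrac (_ * _)); symmetry.
by apply: (reindex_astabs 'R h (F := fun g => orbit_form s (rho g))); rewrite astabsR.
Qed.

Lemma orbit_polyE s : (forall g, g \in G -> (orbit_coefX (rho g)).[s] != 0) ->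
  orbit_poly s = (\prod_(g in G) (orbit_coefX (rho g)).[s])
    *: \prod_(r <- [seq orbit_root s (rho g) | g <- enum G]) ('X - r%:P).
Proof.
move=> coef_neq0; rewrite big_map big_enum /= -scaler_prod.
by apply: eq_bigr => g Gg; rewrite orbit_formE ?coef_neq0.
Qed.

End FiniteSubgroup.

Lemma exists_equivariant_nonbirational_morphism (k : fieldType) (gT : finGroupType)
    (G : {group gT}) (rho : gT -> 'M[k]_2) :
  [pchar k] =i pred0 -> PGL2_embedding G rho -> (2 < #|G|)%N ->
  exists p q : {poly k},
    [/\ P1_morphism p q, equivariant G rho p q, P1_dominant p q & ~ P1_birational p q].
Proof.
move=> char0 rhoG ltG2; set n := #|G|.-1.
have cardG : #|G| = n.+1 by rewrite prednK // ltnW // ltnW.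
have [s [coef_neq0 root_inj]] := exists_generic_point rhoG char0.
set F := orbit_poly G rho s; set roots := [seq orbit_root s (rho g) | g <- enum G].
have uniq_roots : uniq roots.
  by rewrite map_inj_in_uniq ?enum_uniq // => g h; rewrite !mem_enum; apply: root_inj.
have lc_neq0 : \prod_(g in G) (orbit_coefX (rho g)).[s] != 0 by apply/prodf_neq0.
have FE : F = _ *: \prod_(r <- roots) ('X - r%:P) := orbit_polyE coef_neq0.
have szF : size F = n.+2.
  by rewrite FE size_scale // size_prod_XsubC size_map -cardE cardG.
have sepF : separable_poly F.
  by rewrite FE (eqp_separable (eqp_scale _ lc_neq0)) separable_prod_XsubC.
have [morph degF] := polar_map_P1 char0 szF sepF.
exists (- partialY n.+1 F), F^`(); split=> //.
- move=> h Gh; apply: (semi_invariant_commutes (det_rho_neq0 rhoG Gh)).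
    by rewrite szF.
  by rewrite -cardG; apply: orbit_poly_semi_invariant.
- by rewrite /P1_dominant degF -ltnS -cardG ltnW.
- by rewrite /P1_birational degF => n1; move: ltG2; rewrite cardG n1.
Qed.

Theorem lemma9p7 (k : fieldType) (gT : finGroupType) (G : {group gT})
    (rho : gT -> 'M[k]_2) :
  [pchar k] =i pred0 ->
  ((G \isog 'Alt_('I_4)) /\ (exists w : k, 4.-primitive_root w)
   \/ (G \isog 'Sym_('I_4)) /\ (exists w : k, 4.-primitive_root w)
   \/ (G \isog 'Alt_('I_5)) /\ (exists w : k, 5.-primitive_root w)) ->
  PGL2_embedding G rho ->
  exists p q : {poly k},
    [/\ P1_morphism p q, equivariant G rho p q,
        P1_dominant p q & ~ P1_birational p q].
Proof.
(* The roots of unity only guarantee that such an embedding exists; the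
   argument works for every subgroup of PGL_2(k) of order at least 3. *)
move=> char0 G_alt_sym rhoG.
apply: exists_equivariant_nonbirational_morphism => //.
have card_Alt_ord m : #|('Alt_('I_m.+2))%g| = ((m.+2)`! %/ 2)%N.
  by rewrite -[m.+2 in RHS]card_ord -card_Alt ?card_ord // mulKn.
by case: G_alt_sym => [[/card_isog-> _]|[[/card_isog-> _]|[/card_isog-> _]]];
  rewrite ?card_Alt_ord ?card_Sym ?card_ord.
Qed.
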